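(* For all $a,b\in\mathbb{C}$ and integers $n\ge0$, $$\sum_{k=0}^n\binom{n}{k}a^kb^{n-k}H_k(3)=H_n(3)(a+b)^n-3\sum_{k=1}^n(a+b)^{n-k}b^k\,\frac{H_{k-1}^2-H_{k-1}^{(2)}-2H_{k-1}H_{n-k}+H_{n-k}^2-H_{n-k}^{(2)}}{k}.$$
   Context: $H_n=\sum_{k=1}^n\frac1k$ (with $H_0=0$) and $H_n^{(2)}=\sum_{k=1}^n\frac1{k^2}$. The multiple harmonic-like number $H_n(3)=\sum_{1\le k_1+k_2+k_3\le n}\frac{1}{k_1k_2k_3}$ (over positive integers $k_1,k_2,k_3$), with $H_0(3)=0$. Convention $0^0=1$. *)

(* Complex numbers are modelled as R[i] = complex R for R : realType
   (mathcomp-analysis reals), i.e. the field C = R + iR with R the real numbers. *)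
From HB Require Import structures.
From mathcomp Require Import all_boot all_order all_algebra.
From mathcomp Require Import complex.
From mathcomp Require Import reals.
Set Implicit Arguments. Unset Strict Implicit. Unset Printing Implicit Defensive.
Import Order.TTheory GRing.Theory Num.Theory.
Local Open Scope ring_scope.

Definition harm (F : fieldType) (n : nat) : F :=
  \sum_(1 <= k < n.+1) (k%:R)^-1.

Definition harm2 (F : fieldType) (n : nat) : F :=
  \sum_(1 <= k < n.+1) ((k%:R) ^+ 2)^-1.

Definition harm3 (F : fieldType) (n : nat) : F :=
  \sum_(1 <= k1 < n.+1) \sum_(1 <= k2 < n.+1) \sum_(1 <= k3 < n.+1 | (k1 + k2 + k3 <= n)%N)
     ((k1%:R) * (k2%:R) * (k3%:R))^-1.

From HB Require Import structures.
From mathcomp Require Import all_boot all_order all_algebra.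
From mathcomp Require Import complex reals.
From mathcomp Require Import ring zify.
Import Order.TTheory GRing.Theory Num.Theory.
Local Open Scope ring_scope.

(* Writing [S] for the shift of sequences, the left-hand side is [((a S + b)^n H(3))(0)].
   Since [a S + b = (a + b) S + b (1 - S)] and the two summands commute, it equals
   [sum_j C(n, j) (a + b)^(n - j) b^j ((1 - S)^j H(3))(n - j)], so everything reduces to
   the closed form
     [((1 - S)^k H(3))(m) = -3 ((H_(k-1) - H_m)^2 - H^(2)_(k-1) - H^(2)_m) / (k C(m + k, k))],
   proved by induction on [k].  Its case [k = 1] is [(m + 1) (H_(m+1)(3) - H_m(3)) = 3 H_m(2)]
   with [H_m(2) = H_m^2 - H^(2)_m], which follows from the convolutions
   [H_n(3) = sum_k H_(n-k)(2) / k] and [H_n(2) = sum_k H_(n-k) / k]. *)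


Section BinomialTransform.
Variable R : comPzRingType.

Definition shift_diff (g : nat -> R) (i : nat) : R := g i - g i.+1.

Definition binomial_sum (a b : R) (g : nat -> R) (n : nat) : R :=
  \sum_(0 <= k < n.+1) 'C(n, k)%:R * a ^+ k * b ^+ (n - k) * g k.

Lemma sum_binS (w : nat -> R) n :
  \sum_(0 <= j < n.+2) 'C(n.+1, j)%:R * w j =
  \sum_(0 <= j < n.+1) 'C(n, j)%:R * w j + \sum_(0 <= j < n.+1) 'C(n, j)%:R * w j.+1.
Proof.
rewrite big_nat_recl // bin0.
under eq_big_nat => i _ do rewrite binS natrD mulrDl.
rewrite big_split /= addrA; congr (_ + _).
by rewrite [in RHS]big_nat_recl // bin0 big_nat_recr //= bin_small // mul0r addr0.
Qed.

Lemma binomial_sumS a b g n :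
  binomial_sum a b g n.+1 = b * binomial_sum a b g n + a * binomial_sum a b (g \o succn) n.
Proof.
rewrite /binomial_sum.
under eq_big_nat => k _ do rewrite -!mulrA.
rewrite sum_binS !big_distrr /=; congr (_ + _); apply: eq_big_nat => k /andP[_ le_kn].
  by rewrite subSn // exprS; ring.
by rewrite subSS exprS; ring.
Qed.

Lemma binomial_sum_shift_diff a b g n :
  binomial_sum a b g n - binomial_sum a b (g \o succn) n
  = binomial_sum a b (shift_diff g) n.
Proof. by rewrite /binomial_sum -sumrB; apply: eq_bigr => k _; rewrite -mulrBr. Qed.

Lemma iter_shift_diff_succ j g i :
  iter j shift_diff (g \o succn) i = iter j shift_diff g i.+1.
Proof. by elim: j i => [|j IHj] i //=; rewrite /shift_diff !IHj. Qed.

Lemma binomial_sumE a b g n :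
  binomial_sum a b g n
  = \sum_(0 <= j < n.+1) 'C(n, j)%:R * (a + b) ^+ (n - j) * b ^+ j
                           * iter j shift_diff g (n - j)%N.
Proof.
elim: n g => [|n IHn] g; first by rewrite /binomial_sum !big_nat1 !expr0 !mulr1.
have -> : binomial_sum a b g n.+1
          = (a + b) * binomial_sum a b (g \o succn) n + b * binomial_sum a b (shift_diff g) n.
  by rewrite binomial_sumS -binomial_sum_shift_diff; ring.
under eq_big_nat => k _ do rewrite -!mulrA.
rewrite !IHn !big_distrr sum_binS /=; congr (_ + _); apply: eq_big_nat => j /andP[_ le_jn] /=.
  by rewrite iter_shift_diff_succ subSn // exprS -subSn //; ring.
by rewrite subSS exprS -iterSr /=; ring.
Qed.

End BinomialTransform.

Arguments shift_diff {R} g i.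

Section HarmonicNumbers.
Variable F : numFieldType.
Local Notation H := (harm F).
Local Notation H2 := (harm2 F).

Lemma harm0 : H 0 = 0. Proof. by rewrite /harm big_geq. Qed.
Lemma harm2_0 : H2 0 = 0. Proof. by rewrite /harm2 big_geq. Qed.
Lemma harmS n : H n.+1 = H n + n.+1%:R^-1. Proof. by rewrite /harm big_nat_recr. Qed.
Lemma harm2S n : H2 n.+1 = H2 n + (n.+1%:R ^+ 2)^-1.
Proof. by rewrite /harm2 big_nat_recr. Qed.

(* The depth-two analogue [H_n(2)] of [harm3], in closed form. *)
Definition harm_depth2 (n : nat) : F := H n ^+ 2 - H2 n.

Lemma harm_depth2_0 : harm_depth2 0 = 0.
Proof. by rewrite /harm_depth2 harm0 harm2_0 expr0n subr0. Qed.

Lemma harm_depth2S n : harm_depth2 n.+1 = harm_depth2 n + 2%:R * H n / n.+1%:R.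
Proof.
by rewrite /harm_depth2 harmS harm2S; field; rewrite nat1r pnatr_eq0.
Qed.

Lemma natr_inv_partial i k : (0 < i)%N -> (0 < k)%N ->
  i%:R^-1 / k%:R = (i + k)%:R^-1 * (i%:R^-1 + k%:R^-1) :> F.
Proof.
move=> i_gt0 k_gt0; have i0 : i%:R != 0 :> F by rewrite pnatr_eq0 -lt0n.
have k0 : k%:R != 0 :> F by rewrite pnatr_eq0 -lt0n.
have ik0 : (i + k)%:R != 0 :> F by rewrite pnatr_eq0 addn_eq0 negb_and -!lt0n i_gt0.
by rewrite natrD in ik0 *; field; rewrite i0 k0 ik0.
Qed.

Lemma sum_inv_subn_div M :
  \sum_(1 <= k < M.+1) (M.+1 - k)%:R^-1 / k%:R = 2%:R * H M / M.+1%:R.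
Proof.
have sum_rev : \sum_(1 <= k < M.+1) (M.+1 - k)%:R^-1 = H M.
  rewrite /harm (big_nat_rev _ _ 1) /=; apply: eq_big_nat => k /andP[k_gt0 le_kM].
  by congr (_%:R^-1); lia.
transitivity (M.+1%:R^-1 * (\sum_(1 <= k < M.+1) (M.+1 - k)%:R^-1 + H M)).
  rewrite /harm -big_split big_distrr /=; apply: eq_big_nat => k /andP[k_gt0 lt_kM].
  by rewrite natr_inv_partial ?subnK ?subn_gt0 // ltnW.
by rewrite sum_rev; ring.
Qed.

Lemma sum_harm_subn_div M :
  \sum_(1 <= k < M.+1) H (M - k) / k%:R = harm_depth2 M.
Proof.
elim: M => [|M IHM]; first by rewrite big_geq // harm_depth2_0.
rewrite big_nat_recr //= subnn harm0 mul0r addr0 harm_depth2S -IHM -sum_inv_subn_div.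
rewrite -big_split; apply: eq_big_nat => k /andP[k_gt0 lt_kM] /=.
by rewrite subSn // harmS mulrDl.
Qed.

Lemma sum_harm_pred_div N : \sum_(1 <= k < N.+1) H k.-1 / k%:R = harm_depth2 N / 2%:R.
Proof.
elim: N => [|N IHN]; first by rewrite big_geq // harm_depth2_0 mul0r.
rewrite big_nat_recr //= IHN harm_depth2S.
by field; rewrite ?nat1r pnatr_eq0.
Qed.

Lemma harm3E n : harm3 F n = \sum_(1 <= k < n.+1) harm_depth2 (n - k) / k%:R.
Proof.
rewrite /harm3; apply: eq_big_nat => k1 /andP[k1_gt0 lt_k1n].
rewrite -sum_harm_subn_div mulr_suml (big_cat_nat (n := (n - k1).+1)) /=; try lia.
rewrite [X in _ + X]big_nat_cond [X in _ + X]big1 ?addr0; last first.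
  by move=> k2 /andP[/andP[lt_k2 _] _]; rewrite big1 // => k3; lia.
apply: eq_big_nat => k2 /andP[k2_gt0 lt_k2n].
rewrite /harm !mulr_suml [RHS](big_nat_widen _ _ n.+1); last lia.
rewrite big_mkcond [RHS]big_mkcond /=; apply: eq_big_nat => k3 /andP[k3_gt0 _].
have -> : (k1 + k2 + k3 <= n)%N = (k3 < (n - k1 - k2).+1)%N by apply/idP/idP; lia.
case: ifP => // _.
have k10 : k1%:R != 0 :> F by rewrite pnatr_eq0 -lt0n.
have k20 : k2%:R != 0 :> F by rewrite pnatr_eq0 -lt0n.
have k30 : k3%:R != 0 :> F by rewrite pnatr_eq0 -lt0n.
by field; rewrite k10 k20 k30.
Qed.

Lemma harm3S n : n.+1%:R * (harm3 F n.+1 - harm3 F n) = 3%:R * harm_depth2 n.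
Proof.
have sum_rev : \sum_(1 <= k < n.+1) H (n - k) / (n.+1 - k)%:R = harm_depth2 n / 2%:R.
  rewrite -sum_harm_pred_div (big_nat_rev _ _ 1) /=.
  by apply: eq_big_nat => k /andP[k_gt0 lt_kn]; congr (H _ / _%:R); lia.
rewrite !harm3E big_nat_recr //= subnn harm_depth2_0 mul0r addr0 -sumrB big_distrr /=.
transitivity (\sum_(1 <= k < n.+1)
               (2%:R * (H (n - k) / k%:R) + 2%:R * (H (n - k) / (n.+1 - k)%:R))).
  apply: eq_big_nat => k /andP[k_gt0 lt_kn].
  have k0 : k%:R != 0 :> F by rewrite pnatr_eq0 -lt0n.
  have nk0 : (n.+1 - k)%:R != 0 :> F by rewrite pnatr_eq0 -lt0n subn_gt0.
  have -> : n.+1%:R = (n.+1 - k)%:R + k%:R :> F by rewrite -natrD subnK // ltnW.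
  by rewrite subSn // harm_depth2S -subSn //; field; rewrite k0 nk0.
rewrite big_split /= -!big_distrr /= sum_harm_subn_div sum_rev.
by field; rewrite ?pnatr_eq0.
Qed.

Definition harm_gap (m j : nat) : F := (H j - H m) ^+ 2 - H2 j - H2 m.

Lemma harm_gap0 m : harm_gap m 0 = harm_depth2 m.
Proof. by rewrite /harm_gap /harm_depth2 harm0 harm2_0 sub0r sqrrN subr0. Qed.

Lemma harm_gap_step m j :
  (m + j.+2)%:R * harm_gap m j = m.+1%:R * harm_gap m.+1 j + j.+1%:R * harm_gap m j.+1.
Proof.
rewrite /harm_gap !harmS !harm2S natrD.
by field; rewrite ?nat1r ?pnatr_eq0.
Qed.

Lemma iter_shift_diff_harm3 j m :
  iter j.+1 shift_diff (harm3 F) m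
  = - (3%:R * harm_gap m j) / (j.+1%:R * 'C(m + j.+1, j.+1)%:R).
Proof.
elim: j m => [|j IHj] m.
  rewrite /= /shift_diff harm_gap0 addn1 bin1 -harm3S.
  by field; rewrite ?nat1r ?pnatr_eq0.
have -> : iter j.+2 shift_diff (harm3 F) m
          = iter j.+1 shift_diff (harm3 F) m - iter j.+1 shift_diff (harm3 F) m.+1 by [].
have binSl : 'C(m.+1 + j.+1, j.+1)%:R = (m + j.+2)%:R * 'C(m + j.+1, j.+1)%:R / m.+1%:R :> F.
  suff /(congr1 (GRing.natmul (1 : F))) : (m.+1 * 'C(m.+1 + j.+1, j.+1)
                                          = (m + j.+2) * 'C(m + j.+1, j.+1))%N.
    by rewrite !natrM => <-; field; rewrite ?nat1r ?pnatr_eq0.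
  by rewrite [in RHS]addnS mul_bin_down addSn; congr (_ * _)%N; lia.
have binSr : j.+2%:R * 'C(m + j.+2, j.+2)%:R = (m + j.+2)%:R * 'C(m + j.+1, j.+1)%:R :> F.
  by rewrite -!natrM -mul_bin_diag addnS.
have gap : harm_gap m j.+1
           = ((m + j.+2)%:R * harm_gap m j - m.+1%:R * harm_gap m.+1 j) / j.+1%:R.
  by rewrite harm_gap_step; field; rewrite ?nat1r ?pnatr_eq0.
have K0 : 'C(m + j.+1, j.+1)%:R != 0 :> F by rewrite pnatr_eq0 -lt0n bin_gt0 leq_addl.
have s0 : (m + j.+2)%:R != 0 :> F by rewrite pnatr_eq0 addnS.
rewrite !IHj binSr binSl gap.
move: K0 s0; set K := 'C(_, _)%:R; set s := (m + j.+2)%:R; clearbody K s => K0 s0.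
by field; rewrite K0 s0 ?nat1r ?pnatr_eq0.
Qed.

End HarmonicNumbers.

Theorem corollary5 (R : realType) (a b : R[i]) (n : nat) :
  \sum_(0 <= k < n.+1) ('C(n, k))%:R * a ^+ k * b ^+ (n - k) * harm3 _ k
  = harm3 _ n * (a + b) ^+ n
    - 3%:R * \sum_(1 <= k < n.+1) (a + b) ^+ (n - k) * b ^+ k *
        ((harm _ k.-1 ^+ 2 - harm2 _ k.-1 - 2%:R * harm _ k.-1 * harm _ (n - k)
          + harm _ (n - k) ^+ 2 - harm2 _ (n - k)) / k%:R).
Proof.
have := binomial_sumE _ a b (harm3 R[i]) n; rewrite /binomial_sum => ->.
rewrite big_nat_recl // bin0 subn0 !expr0 mulr1 mul1r mulrC; congr (_ + _).
rewrite big_add1 succnK big_distrr -sumrN; apply: eq_big_nat => j /andP[_ lt_jn].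
cbv beta; rewrite iter_shift_diff_harm3 subnK //.
have C0 : 'C(n, j.+1)%:R != 0 :> R[i] by rewrite pnatr_eq0 -lt0n bin_gt0.
rewrite /harm_gap /=.
by field; rewrite C0 ?nat1r ?pnatr_eq0.
Qed.
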